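(* Let $p$ be a prime, $m$ a positive integer, $q=p^m$, $n=q^2+1$. Let $\lambda\in\mathbb{F}_{q^2}^*$ have multiplicative order $r$, where $r\mid (q-1)$ and $\nu_2(r)=\nu_2(q-1)$. Let $\delta\in\mathbb{F}_{q^4}$ be a primitive $rn$-th root of unity with $\delta^n=\lambda$. For a positive integer $s$ with $s\mid(q^2-1)$, let $U_{s(q^2+1)}$ denote the set of all $s(q^2+1)$-th roots of unity in $\mathbb{F}_{q^4}^*$. Define $h(x)=x^{q-1}$ for $x\in U_{r(q^2+1)}$, and $h^{-1}(y_0)=\{x\in U_{r(q^2+1)}: h(x)=y_0\}$. Let $T=\{\delta^{-i}:0\le i\le q^2\}$ and $\lambda^jT=\{\lambda^j\delta^{-i}:0\le i\le q^2\}$ for $0\le j\le r-1$. Then $h$ maps $U_{r(q^2+1)}$ onto $U_{q^2+1}$. Moreover, for $y_0\in U_{q^2+1}$, if $h(x_0)=y_0$ for some $x_0\in U_{r(q^2+1)}$, then $h^{-1}(y_0)=\{\lambda^jx_0: 0\le j\le r-1\}$ and $|h^{-1}(y_0)\cap\lambda^jT|=1$ for every $0\le j\le r-1$.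
   Context: $\nu_2(\cdot)$ denotes the $2$-adic valuation of a positive integer. *)

From HB Require Import structures.
From mathcomp Require Import all_boot all_order all_algebra.
Set Implicit Arguments. Unset Strict Implicit. Unset Printing Implicit Defensive.
Import GRing.Theory.
Local Open Scope ring_scope.

Definition rootsU (F : fieldType) (s : nat) : pred F := fun x => x ^+ s == 1.

Definition hmap (F : fieldType) (q : nat) (x : F) : F := x ^+ (q - 1).

From HB Require Import structures.
From mathcomp Require Import all_boot all_order all_algebra.
From mathcomp Require Import ring.
Import GRing.Theory.
Local Open Scope ring_scope.

(* Write q - 1 = r t.  Since nu_2(r) = nu_2(q - 1), t is odd, and as
   q^2 + 1 = (q - 1)(q + 1) + 2, t is coprime to n = q^2 + 1.  Hence
   h(delta) = (delta^r)^t is again a primitive n-th root of unity, so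
   h(delta^k) = h(delta)^k maps U_{rn} = <delta> onto U_n, with kernel
   {delta^k | n divides k} = <lambda>.  The fibres of h are therefore the cosets
   {lambda^j x0}, and h(lambda^j delta^-i) = h(delta)^-i takes each value of U_n
   for exactly one i < n. *)

Lemma odd_divn_logn2 (a r : nat) :
  (0 < a)%N -> (r %| a)%N -> logn 2 r = logn 2 a -> odd (a %/ r).
Proof.
move=> a_gt0 r_dvd_a log_eq.
have [r_gt0 t_gt0] : (0 < r)%N /\ (0 < a %/ r)%N.
  by apply/andP; rewrite -muln_gt0 mulnC divnK.
have : logn 2 (a %/ r) = 0%N.
  by apply/eqP; rewrite -(eqn_add2l (logn 2 r)) addn0 -lognM // mulnC divnK // log_eq.
apply: contra_eqT; rewrite -dvdn2 => two_dvd.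
by rewrite -lt0n logn_gt0 mem_primes t_gt0 two_dvd.
Qed.

Lemma coprime_sqrS (q t : nat) : odd t -> (t %| q.-1)%N -> coprime t (q ^ 2).+1.
Proof.
move=> t_odd; case: q => [_|q /= /dvdnP[s ->]]; first by rewrite coprimen1.
have -> : (((s * t).+1 ^ 2).+1 = s * (s * t).+2 * t + 2)%N.
  by rewrite expnS expn1; ring.
by rewrite /coprime gcdnMDl -/(coprime t 2) coprimen2.
Qed.

Lemma rootsU_neq0 {F : fieldType} {s} {x : F} : (0 < s)%N -> rootsU s x -> x != 0.
Proof.
by move=> s_gt0; apply: contraTneq => ->; rewrite /rootsU expr0n gtn_eqF // eq_sym oner_eq0.
Qed.

Lemma rootsUM {F : fieldType} s (x y : F) : rootsU s x -> rootsU s y -> rootsU s (x * y).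
Proof. by rewrite /rootsU exprMn => /eqP-> /eqP->; rewrite mulr1. Qed.

Lemma rootsUV {F : fieldType} s (x : F) : rootsU s x -> rootsU s x^-1.
Proof. by rewrite /rootsU exprVn => /eqP->; rewrite invr1. Qed.

Lemma rootsUX {F : fieldType} s (x : F) k : rootsU s x -> rootsU s (x ^+ k).
Proof. by rewrite /rootsU exprAC => /eqP->; rewrite expr1n. Qed.

Lemma hmapM {F : fieldType} q (x y : F) : hmap q (x * y) = hmap q x * hmap q y.
Proof. exact: exprMn. Qed.

Lemma hmapV {F : fieldType} q (x : F) : hmap q x^-1 = (hmap q x)^-1.
Proof. exact: exprVn. Qed.

Lemma hmapX {F : fieldType} q (x : F) k : hmap q (x ^+ k) = hmap q x ^+ k.
Proof. exact: exprAC. Qed.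

Section HmapOnRootsOfUnity.

Context {F : fieldType} {q r n t : nat} {delta : F}.
Hypotheses (q_pred : (q - 1 = r * t)%N) (coprime_tn : coprime t n).
Hypothesis delta_prim : (r * n).-primitive_root delta.

Local Notation lambda := (delta ^+ n).
Local Notation omega := (hmap q delta).

Let rn_gt0 : (0 < r * n)%N. Proof. exact: prim_order_gt0 delta_prim. Qed.
Let r_gt0 : (0 < r)%N. Proof. by move: rn_gt0; rewrite muln_gt0 => /andP[]. Qed.
Let n_gt0 : (0 < n)%N. Proof. by move: rn_gt0; rewrite muln_gt0 => /andP[]. Qed.

Lemma rootsU_deltaX k : rootsU (r * n) (delta ^+ k).
Proof. by apply: rootsUX; rewrite /rootsU prim_expr_order. Qed.

Lemma lambda_prim_root : r.-primitive_root lambda.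
Proof. by rewrite -[in delta ^+ n](mulKn n r_gt0) dvdn_prim_root ?dvdn_mulr. Qed.

Lemma hmap_prim_root : n.-primitive_root omega.
Proof.
have delta_r_prim : n.-primitive_root (delta ^+ r).
  by rewrite -[in delta ^+ r](mulnK r n_gt0) dvdn_prim_root ?dvdn_mull.
by rewrite /hmap q_pred exprM prim_root_exp_coprime.
Qed.

Lemma rootsU_hmap (x : F) : rootsU (r * n) x -> rootsU n (hmap q x).
Proof.
by rewrite /rootsU /hmap q_pred => /eqP x_root; rewrite -!exprM mulnAC exprM x_root expr1n.
Qed.

Lemma hmap_onto (y : F) : rootsU n y -> exists2 x, rootsU (r * n) x & hmap q x = y.
Proof.
move=> /eqP /(prim_rootP hmap_prim_root) [i ->].
by exists (delta ^+ i); [exact: rootsU_deltaX | exact: hmapX].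
Qed.

Lemma hmap_deltaX_eq1 k : (hmap q (delta ^+ k) == 1) = (n %| k)%N.
Proof. by rewrite hmapX (prim_order_dvd hmap_prim_root). Qed.

Lemma hmap_eq1 (x : F) :
  rootsU (r * n) x -> (hmap q x == 1) = [exists j : 'I_r, x == lambda ^+ j].
Proof.
move=> /eqP /(prim_rootP delta_prim) [k ->].
apply/idP/existsP => [|[j /eqP ->]]; last by rewrite -exprM hmap_deltaX_eq1 dvdn_mulr.
rewrite hmap_deltaX_eq1 => /dvdnP [l ->]; exists (Ordinal (ltn_pmod l r_gt0)).
by rewrite /= (prim_expr_mod lambda_prim_root) -exprM mulnC.
Qed.

Lemma hmap_fiber (x0 x : F) : rootsU (r * n) x0 -> rootsU (r * n) x ->
  (hmap q x == hmap q x0) = [exists j : 'I_r, x == lambda ^+ j * x0].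
Proof.
move=> x0_root x_root; have x0_neq0 := rootsU_neq0 rn_gt0 x0_root.
have hx0_neq0 : hmap q x0 != 0 by rewrite expf_neq0.
rewrite -[in LHS](divfK x0_neq0 x) hmapM -{2}[hmap q x0]mul1r (inj_eq (mulIf hx0_neq0)).
rewrite hmap_eq1 ?rootsUM ?rootsUV //; apply: eq_existsb => j.
by rewrite -[in RHS](divfK x0_neq0 x) (inj_eq (mulIf x0_neq0)).
Qed.

Lemma hmap_lambdaX_deltaV_unique (y0 : F) j : rootsU n y0 ->
  exists i0 : 'I_n, forall i : 'I_n, (hmap q (lambda ^+ j * delta ^- i) == y0) = (i == i0).
Proof.
move=> /rootsUV /eqP /(prim_rootP hmap_prim_root) [i0 y0V]; exists i0 => i.
have hmap_lambda : hmap q lambda = 1 by apply/eqP; rewrite hmap_deltaX_eq1.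
rewrite hmapM hmapX hmap_lambda expr1n mul1r hmapV hmapX -(inj_eq invr_inj) invrK y0V.
by rewrite (eq_prim_root_expr hmap_prim_root) !modn_small.
Qed.

End HmapOnRootsOfUnity.

Section HmapFibers.

Context {F : finFieldType} {q r n t : nat} {delta : F}.
Hypotheses (q_pred : (q - 1 = r * t)%N) (coprime_tn : coprime t n).
Hypothesis delta_prim : (r * n).-primitive_root delta.

Local Notation lambda := (delta ^+ n).
Local Notation fiber y0 := [set x | rootsU (r * n) x && (hmap q x == y0)].

Lemma hmap_fiberE (x0 : F) : rootsU (r * n) x0 ->
  fiber (hmap q x0) = [set lambda ^+ j * x0 | j : 'I_r].
Proof.
move=> x0_root; apply/setP => x; rewrite inE.
apply/andP/imsetP => [[x_root] | [j _ ->]].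
  by rewrite (hmap_fiber q_pred coprime_tn delta_prim) // => /existsP[j /eqP->]; exists j.
have x_root : rootsU (r * n) (lambda ^+ j * x0).
  by apply: rootsUM => //; apply/rootsUX/rootsU_deltaX.
split; rewrite // (hmap_fiber q_pred coprime_tn delta_prim) //.
by apply/existsP; exists j.
Qed.

Lemma card_hmap_fiber_shift (y0 : F) j : rootsU n y0 ->
  #|fiber y0 :&: [set lambda ^+ j * delta ^- i | i : 'I_n]| = 1%N.
Proof.
case/(hmap_lambdaX_deltaV_unique q_pred coprime_tn delta_prim _ j) => i0 hmap_eq.
rewrite (_ : _ :&: _ = [set lambda ^+ j * delta ^- i0]) ?cards1 //.
apply/setP => x; rewrite !inE; apply/idP/eqP => [| ->].
  by case/andP => /andP[_ +] /imsetP[i _ x_eq]; rewrite x_eq hmap_eq => /eqP->.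
rewrite hmap_eq eqxx andbT; apply/andP; split; last by apply/imsetP; exists i0.
by apply: rootsUM; [apply: rootsUX | apply: rootsUV]; apply: rootsU_deltaX.
Qed.

End HmapFibers.

Theorem lemma3p3 (p m r : nat) (F : finFieldType) (lambda delta : F) :
  prime p -> (0 < m)%N ->
  #|F| = ((p ^ m) ^ 4)%N ->
  (* lambda is a nonzero element of the subfield F_{q^2} = {x | x^(q^2) = x} *)
  lambda != 0 -> lambda ^+ ((p ^ m) ^ 2) = lambda ->
  r.-primitive_root lambda ->
  (r %| (p ^ m).-1)%N ->
  logn 2 r = logn 2 (p ^ m).-1 ->
  (r * ((p ^ m) ^ 2).+1)%N.-primitive_root delta ->
  delta ^+ ((p ^ m) ^ 2).+1 = lambda ->
  (* h maps U_{r(q^2+1)} into U_{q^2+1} ... *)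
  (forall x : F, rootsU (r * ((p ^ m) ^ 2).+1) x ->
     rootsU ((p ^ m) ^ 2).+1 (hmap (p ^ m) x)) /\
  (* ... and onto it *)
  (forall y : F, rootsU ((p ^ m) ^ 2).+1 y ->
     exists2 x : F, rootsU (r * ((p ^ m) ^ 2).+1) x & hmap (p ^ m) x = y) /\
  (forall y0 x0 : F, rootsU ((p ^ m) ^ 2).+1 y0 ->
     rootsU (r * ((p ^ m) ^ 2).+1) x0 -> hmap (p ^ m) x0 = y0 ->
     [set x | rootsU (r * ((p ^ m) ^ 2).+1) x && (hmap (p ^ m) x == y0)]
       = [set lambda ^+ j * x0 | j : 'I_r] /\
     (forall j : nat, (j < r)%N ->
        #|[set x | rootsU (r * ((p ^ m) ^ 2).+1) x && (hmap (p ^ m) x == y0)]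
          :&: [set lambda ^+ j * delta ^- i | i : 'I_((p ^ m) ^ 2).+1]| = 1%N)).
Proof.
move=> p_prime m_gt0 _ _ _ _ r_dvd log_eq delta_prim <-.
set q := (p ^ m)%N in r_dvd log_eq delta_prim *.
have q_gt1 : (1 < q)%N by rewrite -(ltn_exp2l 0 m (prime_gt1 p_prime)) in m_gt0.
set t := (q.-1 %/ r)%N.
have q_pred : (q - 1 = r * t)%N by rewrite subn1 mulnC divnK.
have coprime_tn : coprime t (q ^ 2).+1.
  apply: coprime_sqrS; last by rewrite -subn1 q_pred dvdn_mull.
  by apply: odd_divn_logn2; rewrite // -subn1 subn_gt0.
split; [|split].
- exact: (rootsU_hmap q_pred).
- exact: (hmap_onto q_pred coprime_tn delta_prim).
- move=> y0 x0 _ x0_root <-; split.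
    exact: (hmap_fiberE q_pred coprime_tn delta_prim).
  move=> j _; apply: (card_hmap_fiber_shift q_pred coprime_tn delta_prim _ j).
  exact: (rootsU_hmap q_pred).
Qed.
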